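(* Let $h:(0,1/2)\to\mathbb{R}$, $h(t)=-3t(1-2t)\log\frac{1-2t}{t}-3t+1$, and for $r>0$ let $f_r(t)=\frac{2}{3(1-r-3t)}\log\frac{1-2t}{t}$ and $k_r=(1-r)/3$. Then: (1) For $0<r<1$ and $t\in(0,k_r)\cup(k_r,1/2)$, $f_r'(t)$ and $r-h(t)$ have the same sign; in particular $f_r'(t)=0$ if and only if $h(t)=r$. (2) For any $0<r<1$, the equation $f_r'(t)=0$ has a unique solution $m_0(r)\in(0,k_r)$. The function $f_r$ is decreasing on $(0,m_0(r))$ and increasing on $(m_0(r),k_r)$ and on $(k_r,1/2)$. Furthermore $\lim_{t\downarrow0}f_r(t)=\lim_{t\uparrow k_r}f_r(t)=\lim_{t\uparrow1/2}f_r(t)=\infty$ and $\lim_{t\downarrow k_r}f_r(t)=-\infty$. (3) For all $r\ge1$, $f_r$ is increasing on $(0,1/2)$, and $\lim_{t\downarrow0}f_r(t)=-\infty$, $\lim_{t\uparrow1/2}f_r(t)=\infty$. (4) On $(0,1)$ the map $r\mapsto m_0(r)$ is decreasing and $\lim_{r\uparrow1}m_0(r)=0$. (5) On $(0,1)$ the map $r\mapsto f_r(m_0(r))$ is increasing and $\lim_{r\uparrow1}f_r(m_0(r))=\infty$.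
   Context: For $0<r<1$, $f_r$ is regarded as a function on $(0,k_r)\cup(k_r,1/2)$; for $r\ge 1$, $f_r$ is defined on $(0,1/2)$. *)

From Stdlib Require Import Reals.
From Coquelicot Require Import Coquelicot.
Open Scope R_scope.

Definition hh (t : R) : R :=
  - 3 * t * (1 - 2 * t) * ln ((1 - 2 * t) / t) - 3 * t + 1.

Definition fr (r t : R) : R :=
  2 / (3 * (1 - r - 3 * t)) * ln ((1 - 2 * t) / t).

Definition k (r : R) : R := (1 - r) / 3.

Definition dom_small (r t : R) : Prop := 0 < t < 1/2 /\ t <> k r.

From Stdlib Require Import Reals Lra.
From Coquelicot Require Import Coquelicot.
Open Scope R_scope.

(* Differentiating, f_r'(t) = 2 (r - h(t)) / (3 t (1 - 2t) (1 - r - 3t)^2), so everything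
   rests on the shape of h.  Since h'(t) = -3 (1 - 4t) log((1 - 2t)/t), h decreases from 1 on
   (0, 1/4], then rises to h(1/3) = 0 and falls again, so h <= 0 on [1/4, 1/2).  Hence for
   0 < r < 1 the equation h = r has exactly one root m0(r); it lies in (0, k_r) because
   h(k_r) < r, and r |-> m0(r) inverts the decreasing branch of h.  For r >= 1, r - h > 0
   throughout.  At the root 1 - r - 3 m0 = 3 m0 (1 - 2 m0) log((1 - 2 m0)/m0), so
   f_r(m0(r)) = 2 / (9 m0 (1 - 2 m0)), which increases to infinity as m0 decreases to 0. *)

Section FilterFacts.

Context {T : Type} {F : (T -> Prop) -> Prop} {FF : Filter F}.

Lemma filterlim_mult_Rbar (f g : T -> R) (a b c : Rbar) :
  filterlim f F (Rbar_locally a) -> filterlim g F (Rbar_locally b) ->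
  is_Rbar_mult a b c -> filterlim (fun x => f x * g x) F (Rbar_locally c).
Proof.
  intros Hf Hg Hc. eapply filterlim_comp_2; [exact Hf | exact Hg |].
  now apply filterlim_Rbar_mult.
Qed.

Lemma filterlim_at_right_of_locally (f : T -> R) (l : R) :
  filterlim f F (locally l) -> F (fun x => l < f x) -> filterlim f F (at_right l).
Proof.
  intros Hl Hpos P [eps HP]. unfold filtermap.
  apply (filter_imp (fun x => ball l eps (f x) /\ l < f x)).
  - intros x [Hb Hx]. now apply HP.
  - apply filter_and; [exact (Hl _ (locally_ball l eps)) | exact Hpos].
Qed.

Lemma filterlim_at_left_of_locally (f : T -> R) (l : R) :
  filterlim f F (locally l) -> F (fun x => f x < l) -> filterlim f F (at_left l).
Proof.
  intros Hl Hneg P [eps HP]. unfold filtermap.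
  apply (filter_imp (fun x => ball l eps (f x) /\ f x < l)).
  - intros x [Hb Hx]. now apply HP.
  - apply filter_and; [exact (Hl _ (locally_ball l eps)) | exact Hneg].
Qed.

End FilterFacts.

Lemma at_left_of_interval (a p : R) (P : R -> Prop) :
  a < p -> (forall t, a < t < p -> P t) -> at_left p P.
Proof.
  intros Hap HP. assert (He : 0 < p - a) by lra.
  exists (mkposreal _ He). intros t Hb Ht. apply HP.
  apply Rabs_def2 in Hb. unfold minus, plus, opp in Hb; simpl in Hb. lra.
Qed.

Lemma at_right_of_interval (p b : R) (P : R -> Prop) :
  p < b -> (forall t, p < t < b -> P t) -> at_right p P.
Proof.
  intros Hpb HP. assert (He : 0 < b - p) by lra.
  exists (mkposreal _ He). intros t Hb Ht. apply HP.
  apply Rabs_def2 in Hb. unfold minus, plus, opp in Hb; simpl in Hb. lra.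
Qed.

Lemma ex_derive_at_left (f : R -> R) (p l : R) :
  ex_derive f p -> f p = l -> filterlim f (at_left p) (locally l).
Proof.
  intros Hf <-. apply (filterlim_filter_le_1 _ (filter_le_within (F := locally p) _)).
  exact (@ex_derive_continuous R_AbsRing R_NormedModule f p Hf).
Qed.

Lemma ex_derive_at_right (f : R -> R) (p l : R) :
  ex_derive f p -> f p = l -> filterlim f (at_right p) (locally l).
Proof.
  intros Hf <-. apply (filterlim_filter_le_1 _ (filter_le_within (F := locally p) _)).
  exact (@ex_derive_continuous R_AbsRing R_NormedModule f p Hf).
Qed.

Lemma is_derive_incr (f df : R -> R) (x y : R) : x < y ->
  (forall t, x <= t <= y -> is_derive f t (df t)) -> (forall t, x < t < y -> 0 < df t) ->
  f x < f y.
Proof.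
  intros Hxy Hd Hpos.
  destruct (MVT_cor2 f df x y Hxy) as [c [Heq Hc]].
  { intros c Hc. now apply is_derive_Reals, Hd. }
  assert (0 < df c * (y - x)) by (apply Rmult_lt_0_compat; [apply Hpos |]; lra).
  lra.
Qed.

Lemma is_derive_decr (f df : R -> R) (x y : R) : x < y ->
  (forall t, x <= t <= y -> is_derive f t (df t)) -> (forall t, x < t < y -> df t < 0) ->
  f y < f x.
Proof.
  intros Hxy Hd Hneg.
  enough (- f x < - f y) by lra.
  apply (is_derive_incr (fun t => - f t) (fun t => - df t)); auto.
  - intros t Ht. now apply @is_derive_opp, Hd.
  - intros t Ht. specialize (Hneg t Ht). lra.
Qed.

Lemma ln_lt_self (y : R) : 0 < y -> ln y < y.
Proof. intros Hy. generalize (exp_ineq1_le (ln y)). rewrite exp_ln; lra. Qed.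

Definition log_ratio (t : R) : R := ln ((1 - 2 * t) / t).

Lemma log_ratio_pos (t : R) : 0 < t < 1/3 -> 0 < log_ratio t.
Proof.
  intros Ht. unfold log_ratio. rewrite <- ln_1. apply ln_increasing; [lra |].
  apply (Rmult_lt_reg_r t); [lra |]. unfold Rdiv. rewrite Rmult_assoc, Rinv_l; lra.
Qed.

Lemma log_ratio_neg (t : R) : 1/3 < t < 1/2 -> log_ratio t < 0.
Proof.
  intros Ht. unfold log_ratio. rewrite <- ln_1. apply ln_increasing.
  - apply Rdiv_lt_0_compat; lra.
  - apply (Rmult_lt_reg_r t); [lra |]. unfold Rdiv. rewrite Rmult_assoc, Rinv_l; lra.
Qed.

Lemma log_ratio_third : log_ratio (1/3) = 0.
Proof. unfold log_ratio. replace ((1 - 2 * (1/3)) / (1/3)) with 1 by field. apply ln_1. Qed.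

Lemma log_ratio_sq_lt (d : R) : 0 < d < 1/2 -> log_ratio (d * d) < 2 / d.
Proof.
  intros Hd. assert (Hd2 : 0 < d * d) by nra.
  apply (Rle_lt_trans _ (ln (/ d) + ln (/ d))).
  - rewrite <- ln_mult, <- Rinv_mult by (apply Rinv_0_lt_compat; lra).
    apply ln_le; [apply Rdiv_lt_0_compat; nra |].
    unfold Rdiv. rewrite <- (Rmult_1_l (/ (d * d))) at 2.
    apply Rmult_le_compat_r; [left; apply Rinv_0_lt_compat |]; nra.
  - assert (ln (/ d) < / d) by (apply ln_lt_self, Rinv_0_lt_compat; lra).
    unfold Rdiv. lra.
Qed.

Lemma ex_derive_log_ratio (t : R) : 0 < t < 1/2 -> ex_derive log_ratio t.
Proof.
  intros Ht. unfold log_ratio. auto_derive.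
  repeat split; try lra. apply Rdiv_lt_0_compat; lra.
Qed.

Lemma log_ratio_at_right_0 : filterlim log_ratio (at_right 0) (Rbar_locally p_infty).
Proof.
  apply (filterlim_comp _ _ _ (fun t => (1 - 2 * t) / t) ln _ (Rbar_locally p_infty));
    [| exact is_lim_ln_p].
  apply (filterlim_mult_Rbar (fun t => 1 - 2 * t) Rinv 1 p_infty).
  - apply (ex_derive_at_right (fun t => 1 - 2 * t)); [auto_derive; trivial | cbv beta; ring].
  - exact filterlim_Rinv_0_right.
  - apply is_Rbar_mult_sym, is_Rbar_mult_p_infty_pos. simpl; lra.
Qed.

Lemma log_ratio_at_left_half : filterlim log_ratio (at_left (1/2)) (Rbar_locally m_infty).
Proof.
  apply (filterlim_comp _ _ _ (fun t => (1 - 2 * t) / t) ln _ (at_right 0));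
    [| exact is_lim_ln_0].
  apply filterlim_at_right_of_locally.
  - apply (ex_derive_at_left (fun t => (1 - 2 * t) / t)); [auto_derive; lra | cbv beta; field].
  - apply (at_left_of_interval 0); [lra |]. intros t Ht. apply Rdiv_lt_0_compat; lra.
Qed.

Lemma hh_log_ratio (t : R) : hh t = 1 - 3 * t - 3 * t * (1 - 2 * t) * log_ratio t.
Proof. unfold hh, log_ratio. ring. Qed.

Lemma is_derive_hh (t : R) : 0 < t < 1/2 -> is_derive hh t (- 3 * (1 - 4 * t) * log_ratio t).
Proof.
  intros Ht. unfold hh, log_ratio.
  assert (0 < (1 - 2 * t) / t) by (apply Rdiv_lt_0_compat; lra).
  auto_derive.
  - repeat split; auto; lra.
  - change ((1 + - (2 * t)) * / t) with ((1 - 2 * t) / t).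
    set (L := ln ((1 - 2 * t) / t)). field. lra.
Qed.

Lemma hh_third : hh (1/3) = 0.
Proof. rewrite hh_log_ratio, log_ratio_third. field. Qed.

Lemma hh_decr (x y : R) : 0 < x -> x < y -> y <= 1/4 -> hh y < hh x.
Proof.
  intros Hx Hxy Hy.
  apply (is_derive_decr hh (fun s => - 3 * (1 - 4 * s) * log_ratio s) _ _ Hxy).
  - intros t Ht. apply is_derive_hh. lra.
  - intros c Hc. assert (0 < log_ratio c) by (apply log_ratio_pos; lra). nra.
Qed.

Lemma hh_nonpos (t : R) : 1/4 <= t < 1/2 -> hh t <= 0.
Proof.
  intros Ht. rewrite <- hh_third.
  destruct (Rtotal_order t (1/3)) as [Hlt | [-> | Hgt]]; [left | right; reflexivity | left].
  - apply (is_derive_incr hh (fun s => - 3 * (1 - 4 * s) * log_ratio s) _ _ Hlt).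
    + intros s Hs. apply is_derive_hh. lra.
    + intros c Hc. assert (0 < log_ratio c) by (apply log_ratio_pos; lra). nra.
  - apply (is_derive_decr hh (fun s => - 3 * (1 - 4 * s) * log_ratio s) _ _ Hgt).
    + intros s Hs. apply is_derive_hh. lra.
    + intros c Hc. assert (log_ratio c < 0) by (apply log_ratio_neg; lra). nra.
Qed.

Lemma hh_lt_1 (t : R) : 0 < t < 1/2 -> hh t < 1.
Proof.
  intros Ht. destruct (Rlt_or_le t (1/4)).
  - rewrite hh_log_ratio. assert (0 < log_ratio t) by (apply log_ratio_pos; lra).
    assert (0 < t * (1 - 2 * t) * log_ratio t) by (apply Rmult_lt_0_compat; nra). lra.
  - assert (hh t <= 0) by (apply hh_nonpos; lra). lra.
Qed.

Lemma hh_sq_gt (d : R) : 0 < d < 1/2 -> 1 - 9 * d < hh (d * d).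
Proof.
  intros Hd. rewrite hh_log_ratio.
  assert (HL : 0 < log_ratio (d * d)) by (apply log_ratio_pos; nra).
  assert (HLd : d * log_ratio (d * d) < 2).
  { assert (d * (2 / d) = 2) by (field; lra).
    generalize (log_ratio_sq_lt d Hd). nra. }
  set (L := log_ratio (d * d)) in *.
  assert (0 <= (d * d) * (d * d) * L) by (apply Rmult_le_pos; [nra | lra]).
  nra.
Qed.

Lemma hh_k_lt (r : R) : 0 < r < 1 -> hh (k r) < r.
Proof.
  intros Hr. unfold k. rewrite hh_log_ratio.
  assert (0 < log_ratio ((1 - r) / 3)) by (apply log_ratio_pos; lra).
  assert (0 < (1 - r) / 3 * (1 - 2 * ((1 - r) / 3)) * log_ratio ((1 - r) / 3))
    by (apply Rmult_lt_0_compat; [apply Rmult_lt_0_compat |]; lra).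
  lra.
Qed.

Lemma hh_pos_lt_quarter (t : R) : 0 < t < 1/2 -> 0 < hh t -> t < 1/4.
Proof.
  intros Ht Hpos. destruct (Rlt_or_le t (1/4)); auto.
  assert (hh t <= 0) by (apply hh_nonpos; lra). lra.
Qed.

Lemma hh_gt_before (m c : R) : 0 < c < m -> m < 1/2 -> 0 < hh m -> hh m < hh c.
Proof.
  intros Hc Hm Hpos. assert (m < 1/4) by (apply hh_pos_lt_quarter; auto; lra).
  apply hh_decr; lra.
Qed.

Lemma hh_lt_after (m c : R) : 0 < m < c -> c < 1/2 -> 0 < hh m -> hh c < hh m.
Proof.
  intros Hc Hm Hpos. assert (m < 1/4) by (apply hh_pos_lt_quarter; auto; lra).
  destruct (Rlt_or_le c (1/4)).
  - apply hh_decr; lra.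
  - assert (hh c <= 0) by (apply hh_nonpos; lra). lra.
Qed.

Lemma hh_inj_pos (t m : R) : 0 < t < 1/2 -> 0 < m < 1/2 -> 0 < hh m -> hh t = hh m -> t = m.
Proof.
  intros Ht Hm Hpos Heq. destruct (Rtotal_order t m) as [Hlt | [-> | Hgt]]; auto.
  - assert (hh m < hh t) by (apply hh_gt_before; lra). lra.
  - assert (hh t < hh m) by (apply hh_lt_after; lra). lra.
Qed.

Lemma hh_root_exists (r : R) : 0 < r < 1 -> exists m, 0 < m < k r /\ hh m = r.
Proof.
  intros Hr. set (d := (1 - r) / 9).
  assert (Hd : 0 < d < 1/2) by (unfold d; lra).
  assert (Hdk : d * d < k r) by (unfold k, d in *; nra).
  assert (Hk : k r < 1/3) by (unfold k; lra).
  assert (Hcont : forall a, d * d <= a <= k r -> continuity_pt (fun t => r - hh t) a).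
  { intros a Ha.
    apply continuity_pt_minus; [apply continuity_pt_const; intros ? ?; reflexivity |].
    apply derivable_continuous_pt. eexists. apply is_derive_Reals, is_derive_hh. nra. }
  destruct (Ranalysis5.IVT_interv _ _ _ Hcont Hdk) as [m [Hm Hroot]].
  - generalize (hh_sq_gt d Hd). unfold d. lra.
  - generalize (hh_k_lt r Hr). lra.
  - cbv beta in Hroot.
    assert (m <> d * d) by (intros ->; generalize (hh_sq_gt d Hd); unfold d in *; lra).
    assert (m <> k r) by (intros ->; generalize (hh_k_lt r Hr); lra).
    exists m. split; [split |]; nra.
Qed.

Definition dfr (r t : R) : R := 2 * (r - hh t) / (3 * t * (1 - 2 * t) * (1 - r - 3 * t) ^ 2).

Lemma is_derive_fr (r t : R) : 0 < t < 1/2 -> t <> k r -> is_derive (fr r) t (dfr r t).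
Proof.
  intros Ht Htk. assert (1 - r - 3 * t <> 0) by (intros E; apply Htk; unfold k; lra).
  unfold fr, dfr, hh.
  assert (0 < (1 - 2 * t) / t) by (apply Rdiv_lt_0_compat; lra).
  auto_derive.
  - repeat split; auto; lra.
  - change ((1 + - (2 * t)) * / t) with ((1 - 2 * t) / t).
    set (L := ln ((1 - 2 * t) / t)). field. repeat split; lra.
Qed.

Lemma dfr_sign (r t : R) : 0 < t < 1/2 -> t <> k r ->
  (0 < dfr r t <-> hh t < r) /\ (dfr r t < 0 <-> r < hh t) /\ (dfr r t = 0 <-> hh t = r).
Proof.
  intros Ht Htk. assert (Hden : 1 - r - 3 * t <> 0) by (intros E; apply Htk; unfold k; lra).
  set (w := 2 / (3 * t * (1 - 2 * t) * (1 - r - 3 * t) ^ 2)).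
  assert (Hw : 0 < w).
  { apply Rdiv_lt_0_compat; [lra |].
    apply Rmult_lt_0_compat; [nra | now apply pow2_gt_0]. }
  replace (dfr r t) with (w * (r - hh t)) by (unfold dfr, w; field; nra).
  split; [| split]; split; intros Hs; nra.
Qed.

Lemma hh_of_fr_critical (r t : R) : 0 < t < 1/2 -> t <> k r -> is_derive (fr r) t 0 -> hh t = r.
Proof.
  intros Ht Htk Hd. apply (dfr_sign r t Ht Htk).
  rewrite <- (is_derive_unique _ _ _ (is_derive_fr r t Ht Htk)).
  exact (is_derive_unique _ _ _ Hd).
Qed.

Lemma fr_incr_on (r a b : R) : 0 <= a -> b <= 1/2 -> (k r <= a \/ b <= k r) ->
  (forall t, a < t < b -> hh t < r) ->
  forall x y, a < x -> x < y -> y < b -> fr r x < fr r y.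
Proof.
  intros Ha Hb Hk Hsign x y Hx Hxy Hy.
  apply (is_derive_incr (fr r) (dfr r) x y Hxy).
  - intros t Ht. apply is_derive_fr; lra.
  - intros t Ht. apply (dfr_sign r t); [lra | lra | apply Hsign; lra].
Qed.

Lemma fr_decr_on (r a b : R) : 0 <= a -> b <= 1/2 -> (k r <= a \/ b <= k r) ->
  (forall t, a < t < b -> r < hh t) ->
  forall x y, a < x -> x < y -> y < b -> fr r y < fr r x.
Proof.
  intros Ha Hb Hk Hsign x y Hx Hxy Hy.
  apply (is_derive_decr (fr r) (dfr r) x y Hxy).
  - intros t Ht. apply is_derive_fr; lra.
  - intros t Ht. apply (dfr_sign r t); [lra | lra | apply Hsign; lra].
Qed.

Definition fr_coef (r t : R) : R := 2 / (3 * (1 - r - 3 * t)).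

Lemma filterlim_fr (r : R) {F : (R -> Prop) -> Prop} {FF : Filter F} (a b c : Rbar) :
  filterlim (fr_coef r) F (Rbar_locally a) -> filterlim log_ratio F (Rbar_locally b) ->
  is_Rbar_mult a b c -> filterlim (fr r) F (Rbar_locally c).
Proof. exact (filterlim_mult_Rbar (fr_coef r) log_ratio a b c). Qed.

Lemma ex_derive_fr_coef (r t : R) : t <> k r -> ex_derive (fr_coef r) t.
Proof. intros Htk. unfold fr_coef. auto_derive. intros E. apply Htk. unfold k. lra. Qed.

Lemma fr_coef_at_left_k (r : R) : filterlim (fr_coef r) (at_left (k r)) (Rbar_locally p_infty).
Proof.
  apply (filterlim_mult_Rbar (fun _ => 2) (fun t => / (3 * (1 - r - 3 * t))) 2 p_infty).
  - apply filterlim_const.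
  - apply (filterlim_comp _ _ _ _ Rinv _ (at_right 0)); [| exact filterlim_Rinv_0_right].
    apply filterlim_at_right_of_locally.
    + apply (ex_derive_at_left (fun t => 3 * (1 - r - 3 * t))); [auto_derive; trivial |].
      cbv beta. unfold k. field.
    + apply (at_left_of_interval (k r - 1)); [lra |]. intros t Ht. unfold k in Ht. lra.
  - apply is_Rbar_mult_sym, is_Rbar_mult_p_infty_pos. simpl; lra.
Qed.

Lemma fr_coef_at_right_k (r : R) : filterlim (fr_coef r) (at_right (k r)) (Rbar_locally m_infty).
Proof.
  apply (filterlim_mult_Rbar (fun _ => 2) (fun t => / (3 * (1 - r - 3 * t))) 2 m_infty).
  - apply filterlim_const.
  - apply (filterlim_comp _ _ _ _ Rinv _ (at_left 0)); [| exact filterlim_Rinv_0_left].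
    apply filterlim_at_left_of_locally.
    + apply (ex_derive_at_right (fun t => 3 * (1 - r - 3 * t))); [auto_derive; trivial |].
      cbv beta. unfold k. field.
    + apply (at_right_of_interval _ (k r + 1)); [lra |]. intros t Ht. unfold k in Ht. lra.
  - apply is_Rbar_mult_sym, is_Rbar_mult_m_infty_pos. simpl; lra.
Qed.

Lemma filterlim_fr_at_right_0_lt_1 (r : R) : r < 1 ->
  filterlim (fr r) (at_right 0) (Rbar_locally p_infty).
Proof.
  intros Hr. apply (filterlim_fr r (fr_coef r 0) p_infty).
  - apply ex_derive_at_right; [apply ex_derive_fr_coef; unfold k; lra | reflexivity].
  - exact log_ratio_at_right_0.
  - apply is_Rbar_mult_sym, is_Rbar_mult_p_infty_pos. simpl.
    unfold fr_coef. apply Rdiv_lt_0_compat; lra.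
Qed.

Lemma filterlim_fr_at_right_0_ge_1 (r : R) : 1 <= r ->
  filterlim (fr r) (at_right 0) (Rbar_locally m_infty).
Proof.
  intros [Hr | <-].
  - apply (filterlim_fr r (fr_coef r 0) p_infty).
    + apply ex_derive_at_right; [apply ex_derive_fr_coef; unfold k; lra | reflexivity].
    + exact log_ratio_at_right_0.
    + apply is_Rbar_mult_sym, is_Rbar_mult_p_infty_neg. simpl.
      unfold fr_coef. replace (2 / (3 * (1 - r - 3 * 0))) with (- (2 / (3 * (r - 1))))
        by (field; lra).
      assert (0 < 2 / (3 * (r - 1))) by (apply Rdiv_lt_0_compat; lra). lra.
  - replace (at_right 0) with (at_right (k 1)) by (f_equal; unfold k; field).
    apply (filterlim_fr 1 m_infty p_infty).
    + exact (fr_coef_at_right_k 1).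
    + replace (k 1) with 0 by (unfold k; field). exact log_ratio_at_right_0.
    + apply is_Rbar_mult_m_infty_pos. simpl; trivial.
Qed.

Lemma filterlim_fr_at_left_half (r : R) : -1/2 < r ->
  filterlim (fr r) (at_left (1/2)) (Rbar_locally p_infty).
Proof.
  intros Hr. apply (filterlim_fr r (fr_coef r (1/2)) m_infty).
  - apply ex_derive_at_left; [apply ex_derive_fr_coef; unfold k; lra | reflexivity].
  - exact log_ratio_at_left_half.
  - apply is_Rbar_mult_sym, is_Rbar_mult_m_infty_neg. simpl.
    unfold fr_coef. replace (2 / (3 * (1 - r - 3 * (1/2)))) with (- (2 / (3 * (r + 1/2))))
      by (field; lra).
    assert (0 < 2 / (3 * (r + 1/2))) by (apply Rdiv_lt_0_compat; lra). lra.
Qed.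

Lemma filterlim_fr_at_left_k (r : R) : 0 < r < 1 ->
  filterlim (fr r) (at_left (k r)) (Rbar_locally p_infty).
Proof.
  intros Hr. apply (filterlim_fr r p_infty (log_ratio (k r))).
  - apply fr_coef_at_left_k.
  - apply ex_derive_at_left; [apply ex_derive_log_ratio; unfold k; lra | reflexivity].
  - apply is_Rbar_mult_p_infty_pos, log_ratio_pos. unfold k; lra.
Qed.

Lemma filterlim_fr_at_right_k (r : R) : 0 < r < 1 ->
  filterlim (fr r) (at_right (k r)) (Rbar_locally m_infty).
Proof.
  intros Hr. apply (filterlim_fr r m_infty (log_ratio (k r))).
  - apply fr_coef_at_right_k.
  - apply ex_derive_at_right; [apply ex_derive_log_ratio; unfold k; lra | reflexivity].
  - apply is_Rbar_mult_m_infty_pos, log_ratio_pos. unfold k; lra.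
Qed.

Lemma fr_derive_sign (r t : R) : 0 < r < 1 -> dom_small r t ->
  ex_derive (fr r) t /\
  (Derive (fr r) t > 0 <-> r - hh t > 0) /\
  (Derive (fr r) t < 0 <-> r - hh t < 0) /\
  (Derive (fr r) t = 0 <-> hh t = r).
Proof.
  intros Hr [Ht Htk]. assert (Hd := is_derive_fr r t Ht Htk).
  rewrite (is_derive_unique _ _ _ Hd).
  destruct (dfr_sign r t Ht Htk) as [Hpos [Hneg Hzero]].
  split; [eexists; exact Hd |]. unfold Rgt.
  split; [| split]; [rewrite Hpos | rewrite Hneg | exact Hzero]; lra.
Qed.

Lemma fr_shape_lt_1 (r : R) : 0 < r < 1 ->
  exists m, 0 < m < k r /\ is_derive (fr r) m 0 /\
    (forall t, dom_small r t -> is_derive (fr r) t 0 -> t = m) /\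
    (forall x y, 0 < x -> x < y -> y < m -> fr r y < fr r x) /\
    (forall x y, m < x -> x < y -> y < k r -> fr r x < fr r y) /\
    (forall x y, k r < x -> x < y -> y < 1/2 -> fr r x < fr r y) /\
    filterlim (fr r) (at_right 0) (Rbar_locally p_infty) /\
    filterlim (fr r) (at_left (k r)) (Rbar_locally p_infty) /\
    filterlim (fr r) (at_left (1/2)) (Rbar_locally p_infty) /\
    filterlim (fr r) (at_right (k r)) (Rbar_locally m_infty).
Proof.
  intros Hr. destruct (hh_root_exists r Hr) as [m [Hm Hhm]].
  assert (Hk : k r < 1/3) by (unfold k; lra).
  assert (Hdm : is_derive (fr r) m 0).
  { replace 0 with (dfr r m).
    - apply is_derive_fr; lra.
    - apply (dfr_sign r m); lra. }
  exists m. split; [exact Hm |]. split; [exact Hdm |].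
  split.
  { intros t [Ht Htk] Hdt. apply hh_inj_pos; [lra | lra | lra |].
    rewrite Hhm. now apply (hh_of_fr_critical r). }
  split.
  { apply (fr_decr_on r 0 m); [lra | lra | lra |].
    intros t Ht. rewrite <- Hhm. apply hh_gt_before; lra. }
  split.
  { apply (fr_incr_on r m (k r)); [lra | lra | lra |].
    intros t Ht. rewrite <- Hhm. apply hh_lt_after; lra. }
  split.
  { apply (fr_incr_on r (k r) (1/2)); [lra | lra | lra |].
    intros t Ht. rewrite <- Hhm. apply hh_lt_after; lra. }
  split; [apply filterlim_fr_at_right_0_lt_1; lra |].
  split; [now apply filterlim_fr_at_left_k |].
  split; [apply filterlim_fr_at_left_half; lra |].
  now apply filterlim_fr_at_right_k.
Qed.

Lemma fr_shape_ge_1 (r : R) : 1 <= r ->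
  (forall x y, 0 < x -> x < y -> y < 1/2 -> fr r x < fr r y) /\
  filterlim (fr r) (at_right 0) (Rbar_locally m_infty) /\
  filterlim (fr r) (at_left (1/2)) (Rbar_locally p_infty).
Proof.
  intros Hr. split; [| split].
  - apply (fr_incr_on r 0 (1/2)); [lra | lra | unfold k; lra |].
    intros t Ht. generalize (hh_lt_1 t Ht). lra.
  - now apply filterlim_fr_at_right_0_ge_1.
  - apply filterlim_fr_at_left_half; lra.
Qed.

Section CriticalPoint.

Variable m0 : R -> R.
Hypothesis m0_crit : forall r, 0 < r < 1 -> 0 < m0 r < k r /\ is_derive (fr r) (m0 r) 0.

Lemma hh_m0 (r : R) : 0 < r < 1 -> hh (m0 r) = r.
Proof.
  intros Hr. destruct (m0_crit r Hr) as [Hm Hd].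
  apply (hh_of_fr_critical r); [unfold k in Hm; lra | lra | exact Hd].
Qed.

Lemma m0_bounds (r : R) : 0 < r < 1 -> 0 < m0 r < 1/4.
Proof.
  intros Hr. destruct (m0_crit r Hr) as [Hm _]. unfold k in Hm.
  split; [lra |]. apply hh_pos_lt_quarter; [lra |]. rewrite hh_m0; lra.
Qed.

Lemma m0_decr (r1 r2 : R) : 0 < r1 -> r1 < r2 -> r2 < 1 -> m0 r2 < m0 r1.
Proof.
  intros H1 H12 H2.
  assert (E1 := hh_m0 r1 ltac:(lra)). assert (E2 := hh_m0 r2 ltac:(lra)).
  assert (B1 := m0_bounds r1 ltac:(lra)). assert (B2 := m0_bounds r2 ltac:(lra)).
  destruct (Rtotal_order (m0 r2) (m0 r1)) as [Hlt | [Heq | Hgt]]; auto.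
  - rewrite Heq in E2. lra.
  - assert (hh (m0 r2) < hh (m0 r1)) by (apply hh_lt_after; lra). lra.
Qed.

Lemma m0_at_right_0 : filterlim m0 (at_left 1) (at_right 0).
Proof.
  intros P [eps HP]. set (e := Rmin eps (1/4)).
  assert (He : 0 < e < 1/2).
  { unfold e. split; [apply Rmin_glb_lt; [apply cond_pos | lra] |].
    generalize (Rmin_r eps (1/4)). lra. }
  assert (Hhe : hh e < 1) by (apply hh_lt_1; lra).
  apply (at_left_of_interval (Rmax 0 (hh e))); [apply Rmax_lub_lt; lra |].
  intros r Hr. generalize (Rmax_l 0 (hh e)) (Rmax_r 0 (hh e)). intros H0 Hh.
  assert (Hm := m0_bounds r ltac:(lra)). assert (Er := hh_m0 r ltac:(lra)).
  assert (Hme : m0 r < e).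
  { destruct (Rlt_or_le (m0 r) e) as [Hlt | [Hgt | Heq]]; auto.
    - assert (hh (m0 r) < hh e) by (apply hh_gt_before; lra). lra.
    - rewrite <- Heq in Er. lra. }
  apply HP; [| lra]. apply Rabs_lt_between'. unfold minus, plus, opp; simpl.
  generalize (Rmin_l eps (1/4)). fold e. lra.
Qed.

Lemma fr_m0 (r : R) : 0 < r < 1 -> fr r (m0 r) = 2 / (9 * m0 r * (1 - 2 * m0 r)).
Proof.
  intros Hr. assert (E := hh_m0 r Hr). assert (Hm := m0_bounds r Hr).
  set (m := m0 r) in *.
  assert (HL : 0 < log_ratio m) by (apply log_ratio_pos; lra).
  rewrite hh_log_ratio in E.
  change (fr r m) with (2 / (3 * (1 - r - 3 * m)) * log_ratio m).
  replace (1 - r - 3 * m) with (3 * m * (1 - 2 * m) * log_ratio m) by lra.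
  field. repeat split; lra.
Qed.

Lemma fr_m0_incr (r1 r2 : R) : 0 < r1 -> r1 < r2 -> r2 < 1 -> fr r1 (m0 r1) < fr r2 (m0 r2).
Proof.
  intros H1 H12 H2. rewrite !fr_m0 by lra.
  assert (B1 := m0_bounds r1 ltac:(lra)). assert (B2 := m0_bounds r2 ltac:(lra)).
  assert (D := m0_decr r1 r2 H1 H12 H2).
  set (m1 := m0 r1) in *. set (m2 := m0 r2) in *.
  assert (0 < 9 * m2 * (1 - 2 * m2)) by nra.
  assert (9 * m2 * (1 - 2 * m2) < 9 * m1 * (1 - 2 * m1)) by nra.
  unfold Rdiv. apply Rmult_lt_compat_l; [lra |].
  apply Rinv_lt_contravar; [apply Rmult_lt_0_compat |]; lra.
Qed.

Lemma fr_m0_at_left_1 : filterlim (fun r => fr r (m0 r)) (at_left 1) (Rbar_locally p_infty).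
Proof.
  apply (filterlim_ext_loc (fun r => 2 / (9 * m0 r * (1 - 2 * m0 r)))).
  { apply (at_left_of_interval 0); [lra |]. intros r Hr. symmetry. now apply fr_m0. }
  apply (filterlim_comp _ _ _ m0 (fun m => 2 / (9 * m * (1 - 2 * m))) _ (at_right 0));
    [exact m0_at_right_0 |].
  apply (filterlim_ext_loc (fun m => 2 / (9 * (1 - 2 * m)) * / m)).
  { apply (at_right_of_interval _ (1/2)); [lra |]. intros m Hm. field. lra. }
  apply (filterlim_mult_Rbar _ _ (2 / 9) p_infty).
  - apply (ex_derive_at_right (fun m => 2 / (9 * (1 - 2 * m)))).
    + auto_derive. lra.
    + cbv beta. field.
  - exact filterlim_Rinv_0_right.
  - apply is_Rbar_mult_sym, is_Rbar_mult_p_infty_pos. simpl; lra.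
Qed.

End CriticalPoint.

Theorem lemma5p3 :
  (* (1) *)
  (forall r t, 0 < r < 1 -> dom_small r t ->
     ex_derive (fr r) t /\
     (Derive (fr r) t > 0 <-> r - hh t > 0) /\
     (Derive (fr r) t < 0 <-> r - hh t < 0) /\
     (Derive (fr r) t = 0 <-> hh t = r)) /\
  (* (2) *)
  (forall r, 0 < r < 1 ->
     exists m, 0 < m < k r /\ is_derive (fr r) m 0 /\
       (forall t, dom_small r t -> is_derive (fr r) t 0 -> t = m) /\
       (forall x y, 0 < x -> x < y -> y < m -> fr r y < fr r x) /\
       (forall x y, m < x -> x < y -> y < k r -> fr r x < fr r y) /\
       (forall x y, k r < x -> x < y -> y < 1/2 -> fr r x < fr r y) /\
       filterlim (fr r) (at_right 0) (Rbar_locally p_infty) /\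
       filterlim (fr r) (at_left (k r)) (Rbar_locally p_infty) /\
       filterlim (fr r) (at_left (1/2)) (Rbar_locally p_infty) /\
       filterlim (fr r) (at_right (k r)) (Rbar_locally m_infty)) /\
  (* (3) *)
  (forall r, 1 <= r ->
     (forall x y, 0 < x -> x < y -> y < 1/2 -> fr r x < fr r y) /\
     filterlim (fr r) (at_right 0) (Rbar_locally m_infty) /\
     filterlim (fr r) (at_left (1/2)) (Rbar_locally p_infty)) /\
  (* (4), (5): for the function m0 given by (2) *)
  (forall m0 : R -> R,
     (forall r, 0 < r < 1 -> 0 < m0 r < k r /\ is_derive (fr r) (m0 r) 0) ->
     (forall r1 r2, 0 < r1 -> r1 < r2 -> r2 < 1 -> m0 r2 < m0 r1) /\
     filterlim m0 (at_left 1) (locally 0) /\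
     (forall r1 r2, 0 < r1 -> r1 < r2 -> r2 < 1 -> fr r1 (m0 r1) < fr r2 (m0 r2)) /\
     filterlim (fun r => fr r (m0 r)) (at_left 1) (Rbar_locally p_infty)).
Proof.
  split; [exact fr_derive_sign |].
  split; [exact fr_shape_lt_1 |].
  split; [exact fr_shape_ge_1 |].
  intros m0 m0_crit. split; [| split; [| split]].
  - exact (m0_decr m0 m0_crit).
  - exact (filterlim_filter_le_2 _ (filter_le_within (F := locally 0) _)
             (m0_at_right_0 m0 m0_crit)).
  - exact (fr_m0_incr m0 m0_crit).
  - exact (fr_m0_at_left_1 m0 m0_crit).
Qed.
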